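(* Let $R$ be a right Noetherian ring, $\alpha$ an automorphism of $R$, $S=R[\theta;\alpha]$, and let $u$ be a central unit of $R$. (a) The lattice of $\alpha$-stable right ideals of $R$ is isomorphic to the lattice of right $S$-submodules of $S/(u-\theta)S$ (via $N\mapsto ((u-\theta)S+N)/(u-\theta)S$). (b) If moreover $R$ is commutative, then the right $S$-module $S/(u-\theta)S$ is simple if and only if $R$ is $\alpha$-simple. (c) If moreover $R$ is a commutative domain with no nonzero proper idempotent ideals (e.g. $R$ a commutative Noetherian domain), then $S/(u-\theta)S$ is an Artinian right $S$-module if and only if $R$ is $\alpha$-simple.
   Context: $R[\theta;\alpha]$ denotes the skew polynomial ring of polynomials $\sum r_i\theta^i$ ($r_i\in R$) with multiplication determined by $\theta r=\alpha(r)\theta$ for $r\in R$. A (right) ideal $I$ of $R$ is $\alpha$-stable if $\alpha(I)=I$. $R$ is $\alpha$-simple if $(0)$ and $R$ are its only $\alpha$-stable ideals. *)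

From HB Require Import structures.
From mathcomp Require Import all_boot all_order all_algebra.
Set Implicit Arguments. Unset Strict Implicit. Unset Printing Implicit Defensive.
Import GRing.Theory.
Local Open Scope ring_scope.

Definition psubset {T : Type} (A B : T -> Prop) := forall x, A x -> B x.
Definition peqset {T : Type} (A B : T -> Prop) := forall x, A x <-> B x.

Definition add_subgroup {V : zmodType} (I : V -> Prop) :=
  [/\ I 0, (forall x y, I x -> I y -> I (x + y)) & (forall x, I x -> I (- x))].

Definition right_ideal {R : nzRingType} (I : R -> Prop) :=
  add_subgroup I /\ (forall x r, I x -> I (x * r)).

Definition two_sided_ideal {R : nzRingType} (I : R -> Prop) :=
  right_ideal I /\ (forall r x, I x -> I (r * x)).

Definition right_noetherian (R : nzRingType) :=
  forall I : nat -> R -> Prop,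
    (forall n, right_ideal (I n)) ->
    (forall n, psubset (I n) (I n.+1)) ->
    exists m, forall n, (m <= n)%N -> peqset (I n) (I m).

Definition alpha_stable {R : nzRingType} (alpha : R -> R) (N : R -> Prop) :=
  forall y, (exists x, N x /\ alpha x = y) <-> N y.

Definition alpha_simple (R : nzRingType) (alpha : R -> R) :=
  forall I : R -> Prop, two_sided_ideal I -> alpha_stable alpha I ->
    peqset I (fun x => x = 0) \/ peqset I (fun _ => True).

Definition central {R : nzRingType} (u : R) := forall r : R, u * r = r * u.

Definition ideal_sq {R : nzRingType} (I : R -> Prop) (x : R) :=
  exists n (a b : 'I_n -> R),
    (forall i, I (a i) /\ I (b i)) /\ x = \sum_(i < n) a i * b i.

Definition no_nontrivial_idempotent_ideal (R : nzRingType) :=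
  forall I : R -> Prop, two_sided_ideal I -> peqset (ideal_sq I) I ->
    peqset I (fun x => x = 0) \/ peqset I (fun _ => True).

(* ---------- The skew polynomial ring S = R[theta; alpha] ----------
   Carrier: {poly R} (coefficient sequences; additive structure, 'X = theta,
   c%:P = the constant c).  Multiplication is the skew product determined by
   theta * r = alpha r * theta:
     (sum p_i theta^i)(sum q_j theta^j) = sum_k (sum_{i+j=k} p_i alpha^i(q_j)) theta^k *)
Definition skew_mul {R : nzRingType} (alpha : R -> R) (p q : {poly R}) : {poly R} :=
  \poly_(k < (size p + size q)%N)
     \sum_(i < k.+1) p`_i * iter i alpha q`_(k - i).

Definition skew_right_ideal {R : nzRingType} (alpha : R -> R) (P : {poly R} -> Prop) :=
  add_subgroup P /\ (forall p s, P p -> P (skew_mul alpha p s)).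

Definition uthetaS {R : nzRingType} (alpha : R -> R) (u : R) (p : {poly R}) :=
  exists q, p = skew_mul alpha (u%:P - 'X) q.

(* Right S-submodules of the quotient module S/(u-theta)S, each represented by
   its preimage in S (correspondence theorem): a right S-submodule of S
   containing (u - theta)S. *)
Definition quot_submodule {R : nzRingType} (alpha : R -> R) (u : R)
    (P : {poly R} -> Prop) :=
  skew_right_ideal alpha P /\ psubset (uthetaS alpha u) P.

(* The map N |-> ((u - theta)S + N)/(u - theta)S, given by its preimage *)
Definition Phi {R : nzRingType} (alpha : R -> R) (u : R) (N : R -> Prop)
    (p : {poly R}) :=
  exists k n, uthetaS alpha u k /\ N n /\ p = k + n%:P.

Definition quot_simple {R : nzRingType} (alpha : R -> R) (u : R) :=
  (exists p, ~ uthetaS alpha u p) /\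
  forall P, quot_submodule alpha u P ->
    peqset P (uthetaS alpha u) \/ peqset P (fun _ => True).

Definition quot_artinian {R : nzRingType} (alpha : R -> R) (u : R) :=
  forall P : nat -> {poly R} -> Prop,
    (forall n, quot_submodule alpha u (P n)) ->
    (forall n, psubset (P n.+1) (P n)) ->
    exists m, forall n, (m <= n)%N -> peqset (P n) (P m).

From HB Require Import structures.
From mathcomp Require Import all_boot all_order all_algebra.
From mathcomp Require Import zify.
From Stdlib Require Import Classical.
Set Implicit Arguments.
Unset Strict Implicit.
Unset Printing Implicit Defensive.
Import GRing.Theory.
Local Open Scope ring_scope.

(* The map e(sum_i p_i theta^i) = sum_i T^i(p_i), where T x = u alpha^-1(x),
   vanishes exactly on (u - theta)S and satisfies
   e(p s) = sum_j T^j(e(p) s_j); so S/(u - theta)S is R, with theta acting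
   by T.  As u is a central unit, its submodules are the right ideals N with
   alpha^-1(N) <= N, and in a right Noetherian ring this already forces
   alpha(N) = N, which gives (a); (b) is (a) read in a commutative ring.
   For (c), a nonzero alpha-stable ideal I yields the descending chain
   I >= I^2 >= I^4 >= ... of alpha-stable ideals; where it stops the ideal is
   idempotent, and nonzero because R is a domain, hence it is R. *)

Lemma iter_can {T : Type} {f f' : T -> T} :
  cancel f' f -> forall n, cancel (iter n f') (iter n f).
Proof. by move=> f'K; elim=> // n IH x; rewrite iterSr iterS f'K IH. Qed.

Section IterAdditive.
Variables (V : zmodType) (f : {additive V -> V}) (n : nat).

Lemma iter_zmod_morphism : zmod_morphism (iter n f).
Proof. by elim: n => [|m IH] x y //=; rewrite IH raddfB. Qed.

HB.instance Definition _ :=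
  GRing.isZmodMorphism.Build V V (iter n f) iter_zmod_morphism.

End IterAdditive.

Section IterRMorphism.
Variables (R : nzRingType) (f : {rmorphism R -> R}) (n : nat).

Lemma iter_monoid_morphism : monoid_morphism (iter n f).
Proof.
elim: n => [|m [IH1 IH2]] //; split=> [|x y] /=; first by rewrite IH1 rmorph1.
by rewrite IH2 rmorphM.
Qed.

HB.instance Definition _ :=
  GRing.isMonoidMorphism.Build R R (iter n f) iter_monoid_morphism.

End IterRMorphism.

Lemma big_ord_widen0 (R : nmodType) (F : nat -> R) a n :
  (a <= n)%N -> (forall i, (a <= i)%N -> F i = 0) ->
  \sum_(i < n) F i = \sum_(i < a) F i.
Proof.
move=> le_an F0; rewrite (big_ord_widen n F le_an) [RHS]big_mkcond /=.
by apply: eq_bigr => i _; case: ltnP => // /F0.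
Qed.

Lemma big_ord_antidiag (R : nmodType) (F : nat -> nat -> R) n :
  \sum_(k < n) \sum_(i < k.+1) F i (k - i)%N = \sum_(i < n) \sum_(j < n - i) F i j.
Proof.
elim: n => [|n IH]; first by rewrite !big_ord0.
rewrite big_ord_recr /= IH [RHS]big_ord_recr /= subSnn big_ord1.
rewrite [in RHS](eq_bigr (fun i : 'I_n => \sum_(j < n - i) F i j + F i (n - i)%N)).
  by rewrite big_split /= big_ord_recr /= subnn addrA.
by move=> i _; rewrite subSn ?(ltnW (ltn_ord i)) // big_ord_recr.
Qed.

Lemma right_noetherian_stable (R : nzRingType) (f : {rmorphism R -> R})
    (f' : R -> R) (N : R -> Prop) :
  right_noetherian R -> cancel f' f -> right_ideal N ->
  (forall x, N x -> N (f x)) -> forall x, N x -> N (f' x).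
Proof.
move=> noethR f'K [[N0 ND NN] NM] Nf x Nx.
(* Stationarity of the ascending chain f^-n(N), tested on f'^(m+1) x. *)
pose I n y := N (iter n f y).
have [m Im] : exists m, forall n, (m <= n)%N -> peqset (I n) (I m).
  apply: noethR => [n|n y Iy]; last by rewrite /I iterS; apply: Nf.
  split; first split=> [|y z|y]; rewrite /I ?raddf0 ?raddfD ?raddfN //; first exact: ND.
    exact: NN.
  by move=> y r Iy; rewrite /I rmorphM; apply: NM.
have := (Im m.+1 (leqnSn m) (iter m.+1 f' x)).1.
by rewrite /I (iter_can f'K) iterSr (iter_can f'K); apply.
Qed.

Lemma quot_simple_artinian (R : nzRingType) (alpha : R -> R) (u : R) :
  quot_simple alpha u -> quot_artinian alpha u.
Proof.
move=> [_ simple] P Psub Pdecr.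
have Pchain k m : psubset (P (k + m)%N) (P m).
  by elim: k => [|k IH] // z Pz; apply/IH/Pdecr.
case: (classic (exists m, peqset (P m) (uthetaS alpha u))) => [[m Pm] | Pfull].
  exists m => n le_mn z; split=> [Pz | /(Pm z).1 /(Psub n).2 //].
  by apply: (Pchain (n - m)%N); rewrite subnK.
exists 0%N => n _ z; suff P_full k : P k z by split=> _; apply: P_full.
have [Pk | Pk] := simple _ (Psub k); last exact/(Pk z).2.
by case: Pfull; exists k.
Qed.

Section IdealSquare.
Variables (R : nzRingType) (I : R -> Prop).

Lemma ideal_sq_mul x y : I x -> I y -> ideal_sq I (x * y).
Proof. by move=> Ix Iy; exists 1%N, (fun=> x), (fun=> y); rewrite big_ord1. Qed.

Lemma ideal_sq_sub : right_ideal I -> psubset (ideal_sq I) I.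
Proof.
move=> [[I0 ID _] IM] _ [n [a [b [Iab ->]]]].
by apply: (big_ind I I0 ID) => i _; apply/IM/(Iab i).1.
Qed.

Lemma ideal_sqD x y : ideal_sq I x -> ideal_sq I y -> ideal_sq I (x + y).
Proof.
move=> [n [a [b [Iab ->]]]] [m [a' [b' [Iab' ->]]]].
pose glue (f : 'I_n -> R) (f' : 'I_m -> R) i :=
  match split i with inl j => f j | inr k => f' k end.
exists (n + m)%N, (glue a a'), (glue b b'); split.
  by move=> i; rewrite /glue; case: (split i) => j.
rewrite big_split_ord /glue; congr (_ + _); apply: eq_bigr => i _.
  by rewrite (unsplitK (inl i)).
by rewrite (unsplitK (inr i)).
Qed.

Lemma ideal_sq_two_sided : two_sided_ideal I -> two_sided_ideal (ideal_sq I).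
Proof.
move=> [[[I0 _ IN] IM] IL].
split; first split; first split.
- by exists 0%N, (fun=> 0), (fun=> 0); rewrite big_ord0; split.
- exact: ideal_sqD.
- move=> _ [n [a [b [Iab ->]]]]; exists n, (fun i => - a i), b; split.
    by move=> i; split; [apply/IN/(Iab i).1 | exact: (Iab i).2].
  by rewrite -sumrN; apply: eq_bigr => i _; rewrite mulNr.
- move=> _ r [n [a [b [Iab ->]]]]; exists n, a, (fun i => b i * r); split.
    by move=> i; split; [exact: (Iab i).1 | apply/IM/(Iab i).2].
  by rewrite mulr_suml; apply: eq_bigr => i _; rewrite mulrA.
move=> r _ [n [a [b [Iab ->]]]]; exists n, (fun i => r * a i), b; split.
  by move=> i; split; [apply/IL/(Iab i).1 | exact: (Iab i).2].
by rewrite mulr_sumr; apply: eq_bigr => i _; rewrite mulrA.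
Qed.

End IdealSquare.

Section SkewPolynomial.
Variables (R : nzRingType) (alpha : {rmorphism R -> R}).
Local Notation "p ** q" := (skew_mul alpha p q) (at level 40).

Lemma coef_skew_mul p q k :
  (p ** q)`_k = \sum_(i < k.+1) p`_i * iter i alpha q`_(k - i).
Proof.
rewrite coef_poly; case: ltnP => // le_pq_k; rewrite big1 // => i _.
case: (ltnP i (size p)) => ltip; last by rewrite nth_default // mul0r.
rewrite [q`_(k - i)]nth_default ?raddf0 ?mulr0 //.
have := ltn_ord i; move: ltip le_pq_k.
rewrite -!/(size _); set a := size p; set b := size q; lia.
Qed.

Lemma skew_mul_zmod_morphism p : zmod_morphism (skew_mul alpha p).
Proof.
move=> q1 q2; apply/polyP => k; rewrite coefB !coef_skew_mul -sumrB.
by apply: eq_bigr => i _; rewrite coefB raddfB mulrBr.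
Qed.

HB.instance Definition _ p :=
  GRing.isZmodMorphism.Build {poly R} {poly R} (skew_mul alpha p)
    (skew_mul_zmod_morphism p).

Lemma skew_mulX p : p ** 'X = p * 'X.
Proof.
apply/polyP => k; rewrite coef_skew_mul coefMX.
case: k => [|k]; first by rewrite big_ord1 /= coefX mulr0.
rewrite big_ord_recr /= subnn coefX !raddf0 mulr0 addr0.
rewrite big_ord_recr /= subSnn coefX eqxx rmorph1 mulr1 big1 ?add0r // => i _.
rewrite coefX; case: eqP => [|_]; last by rewrite raddf0 mulr0.
by have := ltn_ord i; lia.
Qed.

Variable u : R.

Lemma coef_skew_mul_uX q k :
  ((u%:P - 'X) ** q)`_k = u * q`_k - (if k is k'.+1 then alpha q`_k' else 0).
Proof.
rewrite coef_skew_mul big_ord_recl /= coefB coefC coefX /= subr0 subn0.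
case: k => [|k]; first by rewrite big_ord0 addr0 subr0.
rewrite big_ord_recl /= coefB coefC coefX /= sub0r subSS subn0 mulN1r.
by rewrite big1 ?addr0 // => i _; rewrite /bump /= coefB coefC coefX /= subr0 mul0r.
Qed.

Lemma uthetaSD p q :
  uthetaS alpha u p -> uthetaS alpha u q -> uthetaS alpha u (p + q).
Proof. by move=> [p' ->] [q' ->]; exists (p' + q'); rewrite raddfD. Qed.

Lemma uthetaSMX p : uthetaS alpha u p -> uthetaS alpha u (p * 'X).
Proof.
move=> [q ->]; exists (q * 'X); apply/polyP => k.
rewrite coefMX !coef_skew_mul_uX coefMX.
by case: k => [|[|k]]; rewrite /= ?coefMX /= ?raddf0 ?mulr0 ?oppr0 ?addr0.
Qed.

End SkewPolynomial.

(* r theta = u alpha^-1(r) modulo (u - theta)S, see uthetaS_CX below. *)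
Definition theta_act (R : nzRingType) (ginv : R -> R) (u x : R) := u * ginv x.

Definition skew_eval (R : nzRingType) (T : R -> R) (p : {poly R}) :=
  \sum_(i < size p) iter i T p`_i.

Section SkewEval.
Variables (R : nzRingType) (T : {additive R -> R}).

Lemma skew_eval_widen (p : {poly R}) n :
  (size p <= n)%N -> skew_eval T p = \sum_(i < n) iter i T p`_i.
Proof.
move=> le_pn; symmetry.
apply: (big_ord_widen0 (F := fun i => iter i T p`_i)) => // i le_pi.
by rewrite nth_default ?raddf0.
Qed.

Lemma skew_eval_zmod_morphism : zmod_morphism (skew_eval T).
Proof.
move=> p q; have le_pqB := size_polyD p (- q); rewrite size_polyN in le_pqB.
rewrite (skew_eval_widen le_pqB) (skew_eval_widen (leq_maxl (size p) (size q))).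
rewrite (skew_eval_widen (leq_maxr (size p) (size q))) -sumrB.
by apply: eq_bigr => i _; rewrite coefB raddfB.
Qed.

HB.instance Definition _ :=
  GRing.isZmodMorphism.Build {poly R} R (skew_eval T) skew_eval_zmod_morphism.

Lemma skew_evalC c : skew_eval T c%:P = c.
Proof.
by rewrite (@skew_eval_widen _ 1) ?size_polyC ?leq_b1 // big_ord1 /= coefC.
Qed.

End SkewEval.

Section SkewQuotient.
Variables (R : nzRingType) (alpha ginv : {rmorphism R -> R}).
Hypotheses (alphaK : cancel alpha ginv) (ginvK : cancel ginv alpha).
Variable u : R.
Local Notation T := (theta_act ginv u).
Local Notation ev := (skew_eval T).

Lemma theta_act_zmod_morphism : zmod_morphism T.
Proof. by move=> x y; rewrite /theta_act raddfB mulrBr. Qed.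

HB.instance Definition _ :=
  GRing.isZmodMorphism.Build R R T theta_act_zmod_morphism.

Lemma iter_theta_act_mul i x y : iter i T (x * iter i alpha y) = iter i T x * y.
Proof.
elim: i x y => // i IH x y.
by rewrite iterSr [in RHS]iterSr /= /theta_act rmorphM alphaK mulrA IH.
Qed.

Lemma skew_eval_skew_mul (p s : {poly R}) :
  ev (skew_mul alpha p s) = \sum_(j < size s) iter j T (ev p * s`_j).
Proof.
(* Regroup along antidiagonals: T^k(p_i alpha^i(s_j)) = T^j(T^i(p_i) s_j)
   for k = i + j. *)
pose F i j := iter j T (iter i T p`_i * s`_j).
rewrite (skew_eval_widen _ (size_poly _ _)).
transitivity (\sum_(k < size p + size s) \sum_(i < k.+1) F i (k - i)%N).
  apply: eq_bigr => k _; rewrite coef_skew_mul raddf_sum; apply: eq_bigr => i _.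
  by rewrite /F -iter_theta_act_mul -iterD subnK // -ltnS.
rewrite big_ord_antidiag.
rewrite (big_ord_widen0 (F := fun i => \sum_(j < size p + size s - i) F i j)
  (leq_addr _ _)); last first.
  move=> i le_pi; apply: big1 => j _.
  by rewrite /F [p`_i]nth_default // raddf0 mul0r raddf0.
transitivity (\sum_(i < size p) \sum_(j < size s) F i j).
  apply: eq_bigr => i _; apply: big_ord_widen0 => [|j le_sj].
    by have := ltn_ord i; lia.
  by rewrite /F [s`_j]nth_default // mulr0 raddf0.
rewrite exchange_big /=; apply: eq_bigr => j _.
by rewrite /skew_eval mulr_suml raddf_sum.
Qed.

Lemma skew_evalMX p : ev (p * 'X) = T (ev p).
Proof.
rewrite -(skew_mulX alpha) skew_eval_skew_mul size_polyX !big_ord_recl big_ord0 /=.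
by rewrite !coefX /= mulr0 add0r mulr1 addr0.
Qed.

Lemma skew_eval_uX : ev (u%:P - 'X) = 0.
Proof.
rewrite raddfB /= skew_evalC -['X]mul1r -polyC1 skew_evalMX skew_evalC.
by rewrite /theta_act rmorph1 mulr1 subrr.
Qed.

Lemma uthetaS_skew_eval p : uthetaS alpha u p -> ev p = 0.
Proof.
move=> [q ->]; rewrite skew_eval_skew_mul skew_eval_uX.
by rewrite big1 // => j _; rewrite mul0r raddf0.
Qed.

Lemma uthetaS_CX r : uthetaS alpha u (r%:P * 'X - (T r)%:P).
Proof.
exists (- ginv r)%:P; apply/polyP => k.
rewrite coef_skew_mul_uX coefB coefMX !coefC.
case: k => [|[|k]]; rewrite /= ?coefC /=; first by rewrite sub0r subr0 /theta_act mulrN.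
  by rewrite subr0 mulr0 sub0r rmorphN ginvK opprK.
by rewrite mulr0 rmorph0.
Qed.

Lemma uthetaS_sub_skew_eval p : uthetaS alpha u (p - (ev p)%:P).
Proof.
elim/poly_ind: p => [|p c IH]; first by exists 0; rewrite !raddf0 addr0.
have -> : p * 'X + c%:P - (ev (p * 'X + c%:P))%:P =
    (p - (ev p)%:P) * 'X + ((ev p)%:P * 'X - (T (ev p))%:P).
  rewrite raddfD /= skew_evalMX skew_evalC polyCD mulrBl addrA subrK.
  by rewrite opprD addrA [_ - _]addrAC addrK.
by apply: uthetaSD; [apply: uthetaSMX | apply: uthetaS_CX].
Qed.

Lemma uthetaSP p : uthetaS alpha u p <-> ev p = 0.
Proof.
split; first exact: uthetaS_skew_eval.
by move=> ev0; have := uthetaS_sub_skew_eval p; rewrite ev0 subr0.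
Qed.

Lemma PhiP N p : Phi alpha u N p <-> N (ev p).
Proof.
split=> [[k [n [uk [Nn ->]]]] | Nev].
  by rewrite raddfD /= skew_evalC (uthetaS_skew_eval uk) add0r.
exists (p - (ev p)%:P), (ev p); split=> //; last by rewrite subrK.
exact: uthetaS_sub_skew_eval.
Qed.

Lemma Phi_subset N1 N2 :
  psubset (Phi alpha u N1) (Phi alpha u N2) <-> psubset N1 N2.
Proof.
split=> [sub x | sub p]; last by rewrite !PhiP; apply: sub.
by have := sub x%:P; rewrite !PhiP skew_evalC.
Qed.

Lemma not_uthetaS1 : ~ uthetaS alpha u 1.
Proof. by rewrite uthetaSP -polyC1 skew_evalC; apply/eqP/oner_neq0. Qed.

Hypothesis u_central : central u.

Lemma iter_theta_act_stable N i x : right_ideal N -> alpha_stable alpha N ->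
  N x -> N (iter i T x).
Proof.
move=> [_ NM] Nstab; elim: i x => // i IH x Nx /=.
rewrite /theta_act u_central; apply: NM.
have [y [Ny <-]] := (Nstab _).2 (IH x Nx).
by rewrite alphaK.
Qed.

Lemma Phi_quot_submodule N : right_ideal N -> alpha_stable alpha N ->
  quot_submodule alpha u (Phi alpha u N).
Proof.
move=> Nideal Nstab; have [[N0 ND NN] NM] := Nideal.
split; last by move=> p /uthetaSP evp; apply/PhiP; rewrite evp.
split; first split.
- by apply/PhiP; rewrite raddf0.
- by move=> p q /PhiP Np /PhiP Nq; apply/PhiP; rewrite raddfD; apply: ND.
- by move=> p /PhiP Np; apply/PhiP; rewrite raddfN; apply: NN.
move=> p s /PhiP Np; apply/PhiP; rewrite skew_eval_skew_mul.
apply: (big_ind N N0 ND) => j _.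
by apply: iter_theta_act_stable => //; apply: NM.
Qed.

Lemma alpha_stable_ideal_sq I :
  alpha_stable alpha I -> alpha_stable alpha (ideal_sq I).
Proof.
move=> Istab y.
have Ialpha x : I x -> I (alpha x) by move=> Ix; apply/(Istab _).1; exists x.
have Iginv x : I x -> I (ginv x) by move=> /(Istab _).2 [z [Iz <-]]; rewrite alphaK.
split=> [[_ [[n [a [b [Iab ->]]]] <-]] | [n [a [b [Iab ->]]]]].
  exists n, (alpha \o a), (alpha \o b); split.
    by move=> i; split; apply: Ialpha; [exact: (Iab i).1 | exact: (Iab i).2].
  by rewrite rmorph_sum; apply: eq_bigr => i _; rewrite rmorphM.
exists (\sum_(i < n) ginv (a i) * ginv (b i)); split.
  exists n, (ginv \o a), (ginv \o b); split=> // i.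
  by split; apply: Iginv; [exact: (Iab i).1 | exact: (Iab i).2].
by rewrite rmorph_sum; apply: eq_bigr => i _; rewrite rmorphM !ginvK.
Qed.

Lemma quot_submodule_Phi : right_noetherian R -> (exists v, u * v = 1) ->
  forall P, quot_submodule alpha u P ->
  exists N, [/\ right_ideal N, alpha_stable alpha N & peqset (Phi alpha u N) P].
Proof.
move=> noethR [v uv] P [[[P0 PD PN] PM] Pu].
have PevP p : P p <-> P (ev p)%:P.
  have Pk := Pu _ (uthetaS_sub_skew_eval p).
  split=> [Pp | Pe]; last by rewrite -(subrK (ev p)%:P p); apply: PD.
  have -> : (ev p)%:P = p - (p - (ev p)%:P) by rewrite opprB addrC subrK.
  exact/PD/PN.
pose N x := P x%:P.
have Nideal : right_ideal N.
  split; first split=> [|x y|x]; rewrite /N ?raddf0 ?raddfD ?raddfN //.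
  - exact: PD.
  - exact: PN.
  move=> x r Nx; have [-> | r_neq0] := eqVneq r 0; first by rewrite /N mulr0 raddf0.
  have := PM _ r%:P Nx; rewrite PevP skew_eval_skew_mul skew_evalC.
  by rewrite size_polyC r_neq0 big_ord1 /= coefC.
have Nginv x : N x -> N (ginv x).
  move=> Nx; have := (PevP _).1 (PM _ 'X Nx).
  rewrite skew_mulX skew_evalMX skew_evalC /theta_act => /(Nideal.2 _ v).
  by rewrite u_central -mulrA uv mulr1.
exists N; split=> // [y | p]; last by rewrite PhiP PevP.
split=> [[x [Nx <-]] | Ny]; first exact: (right_noetherian_stable noethR alphaK).
by exists (ginv y); rewrite ginvK; split=> //; apply: Nginv.
Qed.

Lemma quot_simple_alpha_simple : quot_simple alpha u -> alpha_simple alpha.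
Proof.
move=> [_ simple] I [Iideal _] Istab.
have I0 : I 0 by case: Iideal => [[]].
have [PhiI | PhiI] := simple _ (Phi_quot_submodule Iideal Istab); [left | right].
  move=> x; split=> [Ix | ->] //.
  by have := (PhiI x%:P).1; rewrite PhiP uthetaSP !skew_evalC; apply.
by move=> x; split=> // _; have := (PhiI x%:P).2 Logic.I; rewrite PhiP skew_evalC.
Qed.

Lemma alpha_simple_quot_simple :
  (forall x y : R, x * y = y * x) -> right_noetherian R -> (exists v, u * v = 1) ->
  alpha_simple alpha -> quot_simple alpha u.
Proof.
move=> comm noethR u_unit simple; split; first by exists 1; apply: not_uthetaS1.
move=> P Psub; have [N [Nideal Nstab PhiN]] := quot_submodule_Phi noethR u_unit Psub.
have N2 : two_sided_ideal N by split=> // r x Nx; rewrite comm; apply: Nideal.2.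
have [Nsimple | Nsimple] := simple N N2 Nstab; [left | right] => p;
  rewrite -PhiN PhiP Nsimple //.
by rewrite uthetaSP.
Qed.

Lemma quot_artinian_alpha_simple :
  (forall x y : R, x * y = 0 -> x = 0 \/ y = 0) ->
  no_nontrivial_idempotent_ideal R -> quot_artinian alpha u -> alpha_simple alpha.
Proof.
move=> domR noidem art I I2 Istab.
have [[x [Ix x_neq0]] | I0] := classic (exists x, I x /\ x <> 0); last first.
  left=> y; split=> [Iy | ->]; last by case: I2 => [[[]]].
  by apply: NNPP => y_neq0; apply: I0; exists y.
pose J n := iter n ideal_sq I.
have J_ok n : [/\ two_sided_ideal (J n), alpha_stable alpha (J n),
    psubset (J n) I & exists y, J n y /\ y <> 0].
  elim: n => [|n [J2 Jstab JI [y [Jy y_neq0]]]]; first by split=> //; exists x.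
  split; [exact: ideal_sq_two_sided | exact: alpha_stable_ideal_sq | |].
    by move=> z /(ideal_sq_sub J2.1) /JI.
  by exists (y * y); split; [apply: ideal_sq_mul | case/domR].
have J2 n : two_sided_ideal (J n) by case: (J_ok n).
have [m Jm] := art (fun n => Phi alpha u (J n))
  (fun n => Phi_quot_submodule (J2 n).1 (let: And4 _ s _ _ := J_ok n in s))
  (fun n => (Phi_subset _ _).2 (ideal_sq_sub (J2 n).1)).
have Jm_idem : peqset (ideal_sq (J m)) (J m).
  move=> z; split; first exact: ideal_sq_sub (J2 m).1 z.
  by apply: (Phi_subset _ _).1 => p /(Jm m.+1 (leqnSn m) p).2.
have [Jm0 | Jm1] := noidem _ (J2 m) Jm_idem.
  by have [_ _ _ [y [/Jm0 y0 y_neq0]]] := J_ok m.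
have [_ _ JI _] := J_ok m; have I1 := JI _ ((Jm1 1).2 Logic.I).
by right=> z; split=> // _; rewrite -(mul1r z); apply: I2.1.2.
Qed.

End SkewQuotient.

Lemma rmorph_inverse (R : nzRingType) (alpha : {rmorphism R -> R}) :
  bijective alpha ->
  exists ginv : {rmorphism R -> R}, cancel alpha ginv /\ cancel ginv alpha.
Proof.
case=> g alphaK gK.
pose ginv : {rmorphism R -> R} :=
  HB.pack g (GRing.isZmodMorphism.Build _ _ g (can2_zmod_morphism alphaK gK))
            (GRing.isMonoidMorphism.Build _ _ g (can2_monoid_morphism alphaK gK)).
by exists ginv.
Qed.

Theorem lemma2p4 (R : nzRingType) (alpha : {rmorphism R -> R})
    (halpha : bijective alpha) (hnoeth : right_noetherian R)
    (u : R) (hu : exists v : R, u * v = 1 /\ v * u = 1) (huc : central u) :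
  [/\ forall N, right_ideal N -> alpha_stable alpha N ->
        quot_submodule alpha u (Phi alpha u N),
      forall N1 N2, right_ideal N1 -> alpha_stable alpha N1 ->
        right_ideal N2 -> alpha_stable alpha N2 ->
        (psubset (Phi alpha u N1) (Phi alpha u N2) <-> psubset N1 N2)
    & forall P, quot_submodule alpha u P ->
        exists N, [/\ right_ideal N, alpha_stable alpha N &
                      peqset (Phi alpha u N) P]] /\
  ((forall x y : R, x * y = y * x) ->
     (quot_simple alpha u <-> alpha_simple alpha)) /\
  ((forall x y : R, x * y = y * x) ->
   (forall x y : R, x * y = 0 -> x = 0 \/ y = 0) ->
   no_nontrivial_idempotent_ideal R ->
     (quot_artinian alpha u <-> alpha_simple alpha)).
Proof.
have [ginv [alphaK ginvK]] := rmorph_inverse halpha.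
have u_unit : exists v, u * v = 1 by have [v [uv _]] := hu; exists v.
have simpleE : (forall x y : R, x * y = y * x) ->
    (quot_simple alpha u <-> alpha_simple alpha).
  move=> comm; split; first exact: (quot_simple_alpha_simple alphaK ginvK huc).
  exact: (alpha_simple_quot_simple alphaK ginvK huc comm hnoeth u_unit).
split; first split.
- exact: (Phi_quot_submodule alphaK ginvK huc).
- by move=> N1 N2 *; apply: (Phi_subset alphaK ginvK).
- exact: (quot_submodule_Phi alphaK ginvK huc hnoeth u_unit).
split=> // comm domR noidem; split.
  exact: (quot_artinian_alpha_simple alphaK ginvK huc domR noidem).
by move/(simpleE comm)/quot_simple_artinian.
Qed.
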